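(* Let $0\leq\nu<\frac12$. Then for all $x>0$, \[ \Big(\frac{x}{x+\frac12-\nu}\Big)^{\nu+\frac12}<\sqrt{\frac{2x}{\pi}}\,\mathrm{e}^{x}K_\nu(x)<1 . \]
   Context: $K_\nu$ denotes the modified Bessel function of the second kind. *)

From Stdlib Require Import Reals.
From Coquelicot Require Import Coquelicot.
Open Scope R_scope.

(* Modified Bessel function of the second kind, for x > 0 and real order nu,
   via the standard integral representation
   K_nu(x) = \int_0^\infty exp(-x cosh t) cosh(nu t) dt
   (the integral converges absolutely for every x > 0). *)
Definition BesselK (nu x : R) : R :=
  RInt_gen (fun t => exp (- x * cosh t) * cosh (nu * t))
           (at_point 0) (Rbar_locally p_infty).

From Stdlib Require Import Reals Lra.
From Coquelicot Require Import Coquelicot.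
Open Scope R_scope.

(* K_nu(x) is the improper integral of e^{-x cosh t} cosh (nu t) over [0, +oo).  For
   nu = 1/2 the substitution s = sqrt (2x) sinh (t/2) turns it into a Gaussian integral,
   so K_{1/2}(x) = sqrt (PI / (2x)) e^{-x}; the upper bound is K_nu < K_{1/2}, since
   cosh (nu t) < cosh (t/2).
   For the lower bound, t |-> ln cosh (p t) + (1+p)/2 ln (p + (1-p) cosh 2t) - ln cosh t
   vanishes at 0 and increases (because tanh (p t) >= p tanh t); with p = 2 nu this gives
   cosh (nu t) > cosh (t/2) B^{-(nu+1/2)} where B = 1 + (2 - 4 nu) sinh^2 (t/2).  Bounding
   the convex function B |-> B^{-(nu+1/2)} below by its tangent at A = 1 + (1/2 - nu)/x
   leaves A^{-(nu+1/2)} K_{1/2}(x) minus a nonnegative multiple of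
   int_0^b e^{-x cosh t} cosh (t/2) (sinh^2 (t/2) - 1/(4x)) dt
     = - sinh (b/2) e^{-x cosh b} / (2x) <= 0.
   Both comparisons are strict because the integrands differ on (0, 1]. *)

(* auto_derive does not know cosh and sinh, hence the unfolding. *)
Ltac solve_continuous :=
  apply (ex_derive_continuous (K := R_AbsRing) (V := R_NormedModule));
  unfold cosh, sinh; auto_derive; auto.

Lemma exp_le_compat a b : a <= b -> exp a <= exp b.
Proof. intros [H| ->]; [now apply Rlt_le, exp_increasing|apply Rle_refl]. Qed.

(** * Improper integrals on [a, +oo) as limits of partial integrals *)

Lemma ex_RInt_of_continuous (f : R -> R) a b :
  (forall t, continuous f t) -> ex_RInt f a b.
Proof. intros Hf. apply (ex_RInt_continuous (V := R_CompleteNormedModule)). auto. Qed.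

Lemma RInt_gen_p_infty (f : R -> R) a (l : R) :
  (forall t, continuous f t) -> is_lim (RInt f a) p_infty l ->
  RInt_gen f (at_point a) (Rbar_locally p_infty) = l.
Proof.
intros Hf Hl. apply is_RInt_gen_unique.
intros P [eps HP].
destruct (Hl (ball l eps)) as [M HM]; [now exists eps|].
apply (Filter_prod _ _ _ (fun u => u = a) (fun b => M < b)); [easy|now exists M|].
intros u b -> Hb. exists (RInt f a b). split.
- apply RInt_correct, ex_RInt_of_continuous, Hf.
- now apply HP, HM.
Qed.

Lemma is_lim_p_infty_incr_bounded (F : R -> R) a B :
  (forall u v, a <= u <= v -> F u <= F v) -> (forall u, a <= u -> F u <= B) ->
  exists l : R, is_lim F p_infty l.
Proof.
intros Hincr HB.
destruct (completeness (fun y => exists u, a <= u /\ y = F u)) as [l [Hub Hlub]].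
- exists B. intros y [u [Hu ->]]. auto.
- exists (F a), a. split; [lra|easy].
- exists l. apply is_lim_spec. intros eps.
  assert (exists u, a <= u /\ l - eps < F u) as [u [Hu Hlt]].
  { apply Classical_Prop.NNPP. intros Hnot.
    enough (l <= l - eps) by (pose proof (cond_pos eps); lra).
    apply Hlub. intros y [v [Hv ->]].
    apply Rnot_lt_le. intros Hv'. apply Hnot. now exists v. }
  exists u. intros v Hv.
  assert (F u <= F v) by (apply Hincr; lra).
  assert (F v <= l) by (apply Hub; exists v; split; [lra|easy]).
  rewrite Rabs_left1; lra.
Qed.

Lemma RInt_nonneg_incr (f : R -> R) a u v :
  (forall t, continuous f t) -> (forall t, a <= t -> 0 <= f t) ->
  a <= u <= v -> RInt f a u <= RInt f a v.
Proof.
intros Hf Hpos Huv.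
assert (Hex : forall c d, ex_RInt f c d) by (intros; now apply ex_RInt_of_continuous).
rewrite <- (RInt_Chasles f a u v) by apply Hex.
enough (0 <= RInt f u v) by (unfold plus; simpl; lra).
apply RInt_ge_0; [lra|apply Hex|]. intros t Ht. apply Hpos. lra.
Qed.

Lemma RInt_gap (f g : R -> R) a :
  (forall t, continuous f t) -> (forall t, continuous g t) ->
  (forall t, a < t -> f t < g t) ->
  exists d, 0 < d /\ forall b, a + 1 <= b -> RInt f a b + d <= RInt g a b.
Proof.
intros Hf Hg Hlt.
assert (Hexf : forall c d, ex_RInt f c d) by (intros; now apply ex_RInt_of_continuous).
assert (Hexg : forall c d, ex_RInt g c d) by (intros; now apply ex_RInt_of_continuous).
exists (RInt g a (a + 1) - RInt f a (a + 1)). split.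
- enough (RInt f a (a + 1) < RInt g a (a + 1)) by lra.
  apply RInt_lt; auto; [lra|]. intros t Ht. apply Hlt. lra.
- intros b Hb.
  rewrite <- (RInt_Chasles f a (a + 1) b), <- (RInt_Chasles g a (a + 1) b) by auto.
  enough (RInt f (a + 1) b <= RInt g (a + 1) b) by (unfold plus; simpl; lra).
  apply RInt_le; auto. intros t Ht. left. apply Hlt. lra.
Qed.

Lemma is_lim_RInt_dominated (f g : R -> R) a (lg : R) :
  (forall t, continuous f t) -> (forall t, continuous g t) ->
  (forall t, a <= t -> 0 <= f t <= g t) ->
  is_lim (RInt g a) p_infty lg -> exists l : R, is_lim (RInt f a) p_infty l.
Proof.
intros Hf Hg Hfg Hlim.
apply (is_lim_p_infty_incr_bounded _ a lg).
- intros u v Huv. apply RInt_nonneg_incr; auto. intros t Ht. apply Hfg, Ht.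
- intros u Hu. apply Rle_trans with (RInt g a u).
  + apply RInt_le; auto using ex_RInt_of_continuous. intros t Ht. apply Hfg. lra.
  + apply (is_lim_le_loc (fun _ => RInt g a u) (RInt g a) p_infty (RInt g a u) lg);
      auto using is_lim_const.
    exists u. intros v Hv. apply RInt_nonneg_incr; auto. 2: lra.
    intros t Ht. specialize (Hfg t Ht). lra.
Qed.

Lemma is_lim_p_infty_scal_id c : 0 < c -> is_lim (fun t => c * t) p_infty p_infty.
Proof.
intros Hc.
replace p_infty with (Rbar_mult c p_infty) at 2; [apply is_lim_scal_l, is_lim_id|].
apply is_Rbar_mult_unique, is_Rbar_mult_sym, is_Rbar_mult_p_infty_pos. exact Hc.
Qed.

(** * The Gaussian integral *)

Definition gauss (c : R) : R := RInt (fun v => exp (- (v * v))) 0 c.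

(* gauss u ^ 2 + gauss_aux u has derivative 0, which evaluates the Gaussian integral. *)
Definition gauss_aux (u : R) : R :=
  RInt (fun t => exp (- (u * u) * (1 + t * t)) / (1 + t * t)) 0 1.

Lemma one_plus_sqr_pos t : 0 < 1 + t * t.
Proof. nra. Qed.

Lemma is_derive_gauss t : is_derive gauss t (exp (- (t * t))).
Proof.
apply (is_derive_RInt (fun v => exp (- (v * v))) gauss 0 t); [|solve_continuous].
apply filter_forall. intros b. apply (RInt_correct (V := R_CompleteNormedModule)), ex_RInt_of_continuous.
intros; solve_continuous.
Qed.

Lemma is_derive_gauss_aux u : is_derive gauss_aux u (-2 * exp (- (u * u)) * gauss u).
Proof.
set (h := fun u t => exp (- (u * u) * (1 + t * t)) / (1 + t * t)).
assert (Hh : forall u t : R, is_derive (fun z : R => h z t) u (-2 * u * exp (- (u * u) * (1 + t * t)))).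
{ intros v t. unfold h. pose proof (one_plus_sqr_pos t). auto_derive; [easy|field; lra]. }
replace (-2 * exp (- (u * u)) * gauss u) with (RInt (fun t => Derive (fun z => h z t) u) 0 1).
- apply (is_derive_RInt_param h 0 1 u).
  + apply filter_forall. intros v t _. eexists. apply Hh.
  + intros t _.
    apply continuity_2d_pt_ext with (fun v t => -2 * v * exp (- (v * v) * (1 + t * t))).
    { intros v s. symmetry. apply is_derive_unique, Hh. }
    apply continuity_2d_pt_mult.
    * apply continuity_2d_pt_mult; [apply continuity_2d_pt_const|apply continuity_2d_pt_id1].
    * apply continuity_1d_2d_pt_comp with (f := exp).
      { apply derivable_continuous_pt, derivable_pt_exp. }
      apply continuity_2d_pt_mult.
      { apply continuity_2d_pt_opp, continuity_2d_pt_mult; apply continuity_2d_pt_id1. }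
      apply continuity_2d_pt_plus; [apply continuity_2d_pt_const|].
      apply continuity_2d_pt_mult; apply continuity_2d_pt_id2.
  + apply filter_forall. intros v. apply ex_RInt_of_continuous. intros t.
    unfold h. pose proof (one_plus_sqr_pos t). solve_continuous; lra.
- rewrite (RInt_ext _ (fun t => -2 * u * exp (- (u * u) * (1 + t * t)))).
  2:{ intros t _. apply is_derive_unique, Hh. }
  apply is_RInt_unique.
  replace (-2 * exp (- (u * u)) * gauss u)
    with (-2 * exp (- (u * u)) * gauss (u * 1) - -2 * exp (- (u * u)) * gauss (u * 0)).
  2:{ rewrite Rmult_1_r, Rmult_0_r. unfold gauss at 2. rewrite RInt_point. unfold zero; simpl. ring. }
  apply (is_RInt_derive (fun s => -2 * exp (- (u * u)) * gauss (u * s))).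
  + intros t _.
    replace (-2 * u * exp (- (u * u) * (1 + t * t)))
      with (-2 * exp (- (u * u)) * (u * exp (- ((u * t) * (u * t))))).
    2:{ replace (- (u * u) * (1 + t * t)) with (- (u * u) + - ((u * t) * (u * t))) by ring.
        rewrite exp_plus. ring. }
    apply (is_derive_scal (fun s => gauss (u * s))).
    apply (is_derive_comp gauss (fun s => u * s)); [apply is_derive_gauss|].
    auto_derive; [easy|ring].
  + intros t _. solve_continuous.
Qed.

Lemma gauss_aux_0 : gauss_aux 0 = PI / 4.
Proof.
unfold gauss_aux. rewrite (RInt_ext _ (fun t => / (1 + t ^ 2))).
2:{ intros t _. replace (- (0 * 0) * (1 + t * t)) with 0 by ring.
    rewrite exp_0. pose proof (one_plus_sqr_pos t). simpl. field. lra. }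
rewrite (is_RInt_unique _ 0 1 (atan 1 - atan 0)).
- rewrite atan_1, atan_0. lra.
- apply (is_RInt_derive atan).
  + intros t _. apply is_derive_Reals, derivable_pt_lim_atan.
  + intros t _. pose proof (one_plus_sqr_pos t). solve_continuous. simpl. lra.
Qed.

Lemma gauss_sqr_add_aux t : 0 <= t -> gauss t * gauss t + gauss_aux t = PI / 4.
Proof.
intros Ht. rewrite <- gauss_aux_0.
replace (gauss_aux 0) with (gauss 0 * gauss 0 + gauss_aux 0)
  by (unfold gauss; rewrite RInt_point; unfold zero; simpl; ring).
destruct (Req_dec t 0) as [->|Hne]; [easy|].
set (F := fun s => gauss s * gauss s + gauss_aux s).
destruct (MVT_cor2 F (fun _ => 0) 0 t) as [c [Hc _]]; [lra| |].
- intros c _. apply is_derive_Reals.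
  apply (is_derive_ext_loc (fun s => gauss s * gauss s + gauss_aux s)); [now apply filter_forall|].
  evar (d : R). replace 0 with d.
  + apply (is_derive_plus (K := R_AbsRing) (V := R_NormedModule));
      [apply (is_derive_mult (K := R_AbsRing)); [apply is_derive_gauss..|intros; apply Rmult_comm]|].
    apply is_derive_gauss_aux.
  + unfold d, plus, mult; simpl; unfold mult; simpl. ring.
- unfold F in Hc. lra.
Qed.

Lemma gauss_aux_bound u : 0 <= gauss_aux u <= exp (- (u * u)).
Proof.
assert (Hex : ex_RInt (fun t => exp (- (u * u) * (1 + t * t)) / (1 + t * t)) 0 1).
{ apply ex_RInt_of_continuous. intros t. pose proof (one_plus_sqr_pos t). solve_continuous; lra. }
unfold gauss_aux. split.
- apply RInt_ge_0; [lra|exact Hex|]. intros t _.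
  pose proof (one_plus_sqr_pos t). pose proof (exp_pos (- (u * u) * (1 + t * t))).
  apply Rlt_le, Rdiv_lt_0_compat; lra.
- apply Rle_trans with (RInt (fun _ => exp (- (u * u))) 0 1).
  + apply RInt_le; [lra|exact Hex|apply ex_RInt_const|]. intros t _.
    pose proof (one_plus_sqr_pos t).
    assert (exp (- (u * u) * (1 + t * t)) <= exp (- (u * u))).
    { apply exp_le_compat. assert (0 <= u * u * (t * t)) by (apply Rmult_le_pos; nra). nra. }
    apply Rle_trans with (exp (- (u * u) * (1 + t * t))); [|easy].
    rewrite <- (Rmult_1_r (exp _)) at 2. unfold Rdiv.
    apply Rmult_le_compat_l; [apply Rlt_le, exp_pos|].
    rewrite <- Rinv_1. apply Rinv_le_contravar; nra.
  + rewrite RInt_const. unfold scal; simpl; unfold mult; simpl. lra.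
Qed.

Lemma gauss_nonneg t : 0 <= t -> 0 <= gauss t.
Proof.
intros Ht. apply RInt_ge_0; [easy| |intros; apply Rlt_le, exp_pos].
apply ex_RInt_of_continuous. intros; solve_continuous.
Qed.

Lemma is_lim_gauss : is_lim gauss p_infty (sqrt PI / 2).
Proof.
assert (Hexp : is_lim (fun u => exp (- (u * u))) p_infty 0).
{ apply (is_lim_comp exp (fun u => - (u * u)) p_infty 0 m_infty); [apply is_lim_exp_m| |now exists 0].
  apply (is_lim_ext (fun u => - (u * u))); [easy|].
  apply (is_lim_opp (fun u => u * u) p_infty p_infty).
  apply (is_lim_mult (fun u => u) (fun u => u) p_infty p_infty p_infty); try apply is_lim_id; easy. }
assert (Haux : is_lim gauss_aux p_infty 0).
{ apply (is_lim_le_le_loc (fun _ => 0) (fun u => exp (- (u * u)))); [|apply is_lim_const|exact Hexp].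
  exists 0. intros u _. apply gauss_aux_bound. }
apply (is_lim_ext_loc (fun u => sqrt (PI / 4 - gauss_aux u))).
- exists 0. intros u Hu.
  rewrite <- (gauss_sqr_add_aux u) by lra. replace (_ + _ - _) with (gauss u * gauss u) by ring.
  apply sqrt_square, gauss_nonneg. lra.
- replace (sqrt PI / 2) with (sqrt (PI / 4 - 0)).
  2:{ rewrite Rminus_0_r, sqrt_div_alt by lra. replace 4 with (2 * 2) by ring.
      rewrite sqrt_square; lra. }
  apply is_lim_comp_continuous.
  + apply (is_lim_minus' (fun _ => PI / 4)); [apply is_lim_const|exact Haux].
  + apply continuity_pt_filterlim, continuity_pt_sqrt. pose proof PI_RGT_0. lra.
Qed.

(** * Hyperbolic inequalities *)

Lemma exp_mul_exp_opp t : exp t * exp (- t) = 1.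
Proof. rewrite <- exp_plus, Rplus_opp_r. apply exp_0. Qed.

Lemma cosh_pos t : 0 < cosh t.
Proof. unfold cosh. pose proof (exp_pos t). pose proof (exp_pos (- t)). lra. Qed.

Lemma sinh_ge_half t : 0 <= t -> t / 2 <= sinh t.
Proof.
intros Ht. unfold sinh. pose proof (exp_ineq1_le t).
assert (exp (- t) <= 1) by (rewrite <- exp_0; apply exp_le_compat; lra).
lra.
Qed.

Lemma sinh_nonneg t : 0 <= t -> 0 <= sinh t.
Proof. intros Ht. pose proof (sinh_ge_half t Ht). lra. Qed.

Lemma cosh_sqr t : cosh t * cosh t = 1 + sinh t * sinh t.
Proof. unfold cosh, sinh. pose proof (exp_mul_exp_opp t). nra. Qed.

Lemma sinh_double t : sinh (2 * t) = 2 * sinh t * cosh t.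
Proof.
unfold cosh, sinh. replace (2 * t) with (t + t) by ring.
rewrite Ropp_plus_distr, !exp_plus. field.
Qed.

Lemma cosh_double t : cosh (2 * t) = 1 + 2 * (sinh t * sinh t).
Proof.
unfold cosh, sinh. replace (2 * t) with (t + t) by ring.
rewrite Ropp_plus_distr, !exp_plus. pose proof (exp_mul_exp_opp t). nra.
Qed.

Lemma cosh_lt a b : 0 <= a < b -> cosh a < cosh b.
Proof.
intros [Ha Hab]. unfold cosh. rewrite !exp_Ropp.
assert (HA : 1 <= exp a) by (pose proof (exp_ineq1_le a); lra).
assert (HB : exp a < exp b) by (now apply exp_increasing).
set (A := exp a) in *. set (B := exp b) in *.
assert (E : B - A + / B - / A = (B - A) * (1 - / (A * B))) by (field; lra).
assert (/ (A * B) < 1) by (rewrite <- Rinv_1; apply Rinv_lt_contravar; nra).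
nra.
Qed.

Lemma tanh_scale_ge p t : 0 <= p <= 1 -> 0 <= t ->
  p * sinh t * cosh (p * t) <= sinh (p * t) * cosh t.
Proof.
intros Hp Ht. destruct (Req_dec t 0) as [->|Hne].
{ rewrite Rmult_0_r, sinh_0. lra. }
set (psi := fun s => sinh (p * s) * cosh s - p * sinh s * cosh (p * s)).
destruct (MVT_cor2 psi (fun s => (1 - p * p) * sinh (p * s) * sinh s) 0 t)
  as [c [Hc [Hc0 _]]]; [lra| |].
- intros c _. apply is_derive_Reals. unfold psi, cosh, sinh. auto_derive; [easy|field].
- assert (psi 0 = 0) by (unfold psi; rewrite Rmult_0_r, sinh_0; ring).
  assert (0 <= (1 - p * p) * sinh (p * c) * sinh c).
  { apply Rmult_le_pos; [apply Rmult_le_pos|]; [nra|apply sinh_nonneg; nra|apply sinh_nonneg; lra]. }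
  unfold psi in *. nra.
Qed.

Lemma cosh_convex_comb_ge1 p t : 0 <= p <= 1 -> 1 <= p + (1 - p) * cosh (2 * t).
Proof. intros Hp. rewrite cosh_double. assert (0 <= sinh t * sinh t) by nra. nra. Qed.

Definition cosh_log_ratio (p t : R) : R :=
  ln (cosh (p * t)) + (1 + p) / 2 * ln (p + (1 - p) * cosh (2 * t)) - ln (cosh t).

Lemma is_derive_cosh_log_ratio p t : 0 <= p <= 1 ->
  is_derive (cosh_log_ratio p) t
    (p * sinh (p * t) / cosh (p * t)
     + (1 + p) * (1 - p) * sinh (2 * t) / (p + (1 - p) * cosh (2 * t))
     - sinh t / cosh t).
Proof.
intros Hp.
pose proof (cosh_pos (p * t)) as Hcp. pose proof (cosh_pos t) as Hc.
pose proof (cosh_convex_comb_ge1 p t Hp) as HD.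
unfold cosh_log_ratio, cosh, sinh in *. auto_derive.
- repeat split; lra.
- field. repeat split; lra.
Qed.

Lemma cosh_log_ratio_deriv_pos p t : 0 <= p < 1 -> 0 < t ->
  0 < p * sinh (p * t) / cosh (p * t)
      + (1 + p) * (1 - p) * sinh (2 * t) / (p + (1 - p) * cosh (2 * t))
      - sinh t / cosh t.
Proof.
intros Hp Ht.
pose proof (cosh_pos (p * t)) as Hc. pose proof (cosh_pos t) as HC.
pose proof (cosh_convex_comb_ge1 p t ltac:(lra)) as HD.
pose proof (tanh_scale_ge p t ltac:(lra) ltac:(lra)) as Htanh.
pose proof (sinh_lt 0 t Ht) as HS. rewrite sinh_0 in HS.
pose proof (cosh_sqr t) as Hcs.
rewrite sinh_double. rewrite cosh_double in *.
set (S := sinh t) in *. set (C := cosh t) in *.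
set (s := sinh (p * t)) in *. set (c := cosh (p * t)) in *.
set (D := p + (1 - p) * (1 + 2 * (S * S))) in *.
(* split sinh t / cosh t = p^2 tanh t + (1 - p^2) tanh t and compare the two pieces *)
assert (Hts : p * S / C <= s / c).
{ apply Rmult_le_reg_r with (C * c); [nra|].
  replace (p * S / C * (C * c)) with (p * S * c) by (field; lra).
  replace (s / c * (C * c)) with (s * C) by (field; lra). lra. }
assert (Hmain : 0 < (1 + p) * (1 - p) * (2 * S * C) / D - (1 - p * p) * S / C).
{ replace ((1 + p) * (1 - p) * (2 * S * C) / D - (1 - p * p) * S / C)
    with ((1 - p * p) * S * (2 * (C * C) - D) / (C * D)) by (field; lra).
  replace (2 * (C * C) - D) with (1 + 2 * p * (S * S)) by (unfold D; rewrite Hcs; ring).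
  apply Rdiv_lt_0_compat; [|nra].
  apply Rmult_lt_0_compat; [apply Rmult_lt_0_compat; nra|].
  assert (0 <= p * (S * S)) by (apply Rmult_le_pos; nra). lra. }
assert (p * (p * S / C) <= p * (s / c)) by (apply Rmult_le_compat_l; lra).
replace (p * s / c) with (p * (s / c)) by (field; lra).
replace (S / C) with (p * (p * S / C) + (1 - p * p) * S / C) by (field; lra).
lra.
Qed.

Lemma cosh_log_ratio_pos p t : 0 <= p < 1 -> 0 < t -> 0 < cosh_log_ratio p t.
Proof.
intros Hp Ht.
destruct (MVT_cor2 (cosh_log_ratio p) (fun s => p * sinh (p * s) / cosh (p * s)
     + (1 + p) * (1 - p) * sinh (2 * s) / (p + (1 - p) * cosh (2 * s))
     - sinh s / cosh s) 0 t Ht) as [c [Hc [Hc0 _]]].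
- intros c _. apply is_derive_Reals, is_derive_cosh_log_ratio. lra.
- assert (cosh_log_ratio p 0 = 0).
  { unfold cosh_log_ratio. rewrite !Rmult_0_r, cosh_0, ln_1.
    replace (p + (1 - p) * 1) with 1 by ring. rewrite ln_1. ring. }
  pose proof (cosh_log_ratio_deriv_pos p c Hp Hc0). nra.
Qed.

Lemma cosh_lt_cosh_mul_Rpower p t : 0 <= p < 1 -> 0 < t ->
  cosh t < cosh (p * t) * Rpower (p + (1 - p) * cosh (2 * t)) ((1 + p) / 2).
Proof.
intros Hp Ht. pose proof (cosh_log_ratio_pos p t Hp Ht) as Hpos.
pose proof (cosh_convex_comb_ge1 p t ltac:(lra)).
rewrite <- (exp_ln (cosh t)), <- (exp_ln (cosh (p * t))) by apply cosh_pos.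
unfold Rpower. rewrite <- exp_plus. apply exp_increasing.
unfold cosh_log_ratio in Hpos. lra.
Qed.

Lemma ln_le_sub_1 y : 0 < y -> ln y <= y - 1.
Proof.
intros Hy. pose proof (exp_ineq1_le (ln y)) as Hexp. rewrite exp_ln in Hexp by exact Hy. lra.
Qed.

Lemma Rpower_opp_tangent_le a A B : 0 <= a -> 0 < A -> 0 < B ->
  Rpower A (- a) * (1 - a * (B / A - 1)) <= Rpower B (- a).
Proof.
intros Ha HA HB. unfold Rpower.
replace (- a * ln B) with (- a * ln A + - a * ln (B / A)) by (rewrite ln_div by easy; ring).
rewrite exp_plus. apply Rmult_le_compat_l; [apply Rlt_le, exp_pos|].
pose proof (exp_ineq1_le (- a * ln (B / A))).
pose proof (ln_le_sub_1 (B / A) ltac:(apply Rdiv_lt_0_compat; easy)).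
nra.
Qed.

(** * Bounds for K_nu *)

Definition besselK_integrand (nu x t : R) : R := exp (- x * cosh t) * cosh (nu * t).

Lemma continuous_besselK_integrand nu x t : continuous (besselK_integrand nu x) t.
Proof. unfold besselK_integrand. solve_continuous. Qed.

Section HalfOrder.

Variable x : R.
Hypothesis hx : 0 < x.

Lemma RInt_besselK_half b :
  RInt (besselK_integrand (1/2) x) 0 b
  = exp (- x) * (2 / sqrt (2 * x)) * gauss (sqrt (2 * x) * sinh (b / 2)).
Proof.
assert (Hs : 0 < sqrt (2 * x)) by (apply sqrt_lt_R0; lra).
set (F := fun s => exp (- x) * (2 / sqrt (2 * x)) * gauss (sqrt (2 * x) * sinh (s / 2))).
apply is_RInt_unique. change (is_RInt (besselK_integrand (1/2) x) 0 b (F b)).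
replace (F b) with (minus (F b) (F 0)).
2:{ unfold F, gauss. rewrite Rdiv_0_l, sinh_0, Rmult_0_r, RInt_point.
    unfold minus, plus, opp, zero; simpl. ring. }
apply (is_RInt_derive F); [|intros; apply continuous_besselK_integrand].
intros t _. unfold F, besselK_integrand.
replace (exp (- x * cosh t) * cosh (1 / 2 * t))
  with (exp (- x) * (2 / sqrt (2 * x))
        * (sqrt (2 * x) * (/ 2 * cosh (t / 2))
           * exp (- ((sqrt (2 * x) * sinh (t / 2)) * (sqrt (2 * x) * sinh (t / 2)))))).
2:{ replace (cosh t) with (cosh (2 * (t / 2))) by (f_equal; field).
    rewrite cosh_double.
    replace ((sqrt (2 * x) * sinh (t / 2)) * (sqrt (2 * x) * sinh (t / 2)))
      with (sqrt (2 * x) * sqrt (2 * x) * (sinh (t / 2) * sinh (t / 2))) by ring.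
    rewrite sqrt_sqrt by lra.
    replace (- x * (1 + 2 * (sinh (t / 2) * sinh (t / 2))))
      with (- x + - (2 * x * (sinh (t / 2) * sinh (t / 2)))) by ring.
    replace (1 / 2 * t) with (t / 2) by field.
    rewrite exp_plus. field. lra. }
apply is_derive_scal.
apply (is_derive_comp gauss (fun s => sqrt (2 * x) * sinh (s / 2))); [apply is_derive_gauss|].
apply is_derive_scal.
apply (is_derive_comp sinh (fun s => s / 2)).
- apply is_derive_Reals, derivable_pt_lim_sinh.
- auto_derive; [easy|field].
Qed.

Lemma is_lim_RInt_besselK_half :
  is_lim (RInt (besselK_integrand (1/2) x) 0) p_infty (sqrt (PI / (2 * x)) * exp (- x)).
Proof.
assert (Hs : 0 < sqrt (2 * x)) by (apply sqrt_lt_R0; lra).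
apply (is_lim_ext (fun b => exp (- x) * (2 / sqrt (2 * x)) * gauss (sqrt (2 * x) * sinh (b / 2)))).
{ intros b. symmetry. apply RInt_besselK_half. }
replace (sqrt (PI / (2 * x)) * exp (- x))
  with (exp (- x) * (2 / sqrt (2 * x)) * (sqrt PI / 2))
  by (rewrite sqrt_div_alt by lra; field; lra).
apply (is_lim_scal_l _ _ _ (sqrt PI / 2)).
apply (is_lim_comp gauss _ p_infty (sqrt PI / 2) p_infty); [apply is_lim_gauss| |now exists 0].
apply (is_lim_le_p_loc (fun b => sqrt (2 * x) / 4 * b)).
- exists 0. intros b Hb. pose proof (sinh_ge_half (b / 2) ltac:(lra)) as Hsinh.
  apply Rmult_le_compat_l with (r := sqrt (2 * x)) in Hsinh; lra.
- apply is_lim_p_infty_scal_id. lra.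
Qed.

End HalfOrder.

Section BesselBounds.

Variables nu x : R.
Hypothesis hnu0 : 0 <= nu.
Hypothesis hnu1 : nu < 1/2.
Hypothesis hx : 0 < x.

Lemma besselK_integrand_lt_half t : 0 < t ->
  besselK_integrand nu x t < besselK_integrand (1/2) x t.
Proof.
intros Ht. unfold besselK_integrand. apply Rmult_lt_compat_l; [apply exp_pos|].
apply cosh_lt. nra.
Qed.

Lemma is_lim_RInt_besselK :
  is_lim (RInt (besselK_integrand nu x) 0) p_infty (BesselK nu x).
Proof.
destruct (is_lim_RInt_dominated (besselK_integrand nu x) (besselK_integrand (1/2) x) 0
            (sqrt (PI / (2 * x)) * exp (- x))) as [l Hl];
  [apply continuous_besselK_integrand..| |now apply is_lim_RInt_besselK_half|].
- intros t [Ht| <-].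
  + split; [|now apply Rlt_le, besselK_integrand_lt_half].
    apply Rlt_le, Rmult_lt_0_compat; [apply exp_pos|apply cosh_pos].
  + unfold besselK_integrand. rewrite !Rmult_0_r, cosh_0, Rmult_1_r.
    pose proof (exp_pos (- x * 1)). lra.
- unfold BesselK. fold (besselK_integrand nu x).
  now rewrite (RInt_gen_p_infty _ 0 l (continuous_besselK_integrand nu x)).
Qed.

Lemma BesselK_lt_half : BesselK nu x < sqrt (PI / (2 * x)) * exp (- x).
Proof.
destruct (RInt_gap (besselK_integrand nu x) (besselK_integrand (1/2) x) 0)
  as [d [Hd Hgap]]; [apply continuous_besselK_integrand..|apply besselK_integrand_lt_half|].
enough (BesselK nu x + d <= sqrt (PI / (2 * x)) * exp (- x)) by lra.
apply (is_lim_le_loc (fun b => RInt (besselK_integrand nu x) 0 b + d)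
         (RInt (besselK_integrand (1/2) x) 0) p_infty
         (BesselK nu x + d) (sqrt (PI / (2 * x)) * exp (- x))).
- exists 1. intros b Hb. apply Hgap. lra.
- apply (is_lim_plus' _ (fun _ => d)); [apply is_lim_RInt_besselK|apply is_lim_const].
- now apply is_lim_RInt_besselK_half.
Qed.

Definition besselK_correction (t : R) : R :=
  exp (- x * cosh t) * cosh (t / 2) * (sinh (t / 2) * sinh (t / 2) - / (4 * x)).

Lemma continuous_besselK_correction t : continuous besselK_correction t.
Proof. unfold besselK_correction. solve_continuous. Qed.

Lemma RInt_besselK_correction b :
  RInt besselK_correction 0 b = - (sinh (b / 2) * exp (- x * cosh b)) / (2 * x).
Proof.
set (F := fun s => - (sinh (s / 2) * exp (- x * cosh s)) / (2 * x)).
apply is_RInt_unique. change (is_RInt besselK_correction 0 b (F b)).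
replace (F b) with (minus (F b) (F 0)).
2:{ unfold F. rewrite Rdiv_0_l, sinh_0. unfold minus, plus, opp; simpl. field. lra. }
apply (is_RInt_derive F); [|intros; apply continuous_besselK_correction].
intros t _.
replace (besselK_correction t)
  with (- (/ 2 * cosh (t / 2) * exp (- x * cosh t)
           + sinh (t / 2) * (- x * sinh t * exp (- x * cosh t))) / (2 * x)).
- unfold F, cosh, sinh. auto_derive; [easy|unfold Rdiv; field; lra].
- unfold besselK_correction.
  replace (sinh t) with (2 * sinh (t / 2) * cosh (t / 2))
    by (rewrite <- sinh_double; f_equal; field).
  clear F. field. lra.
Qed.

Let a := nu + 1/2.
(* Tangent point for the convex map B |-> B^{-a}: with this A, B - A is a multiple of
   sinh (t/2)^2 - 1/(4x), so the error term is besselK_correction. *)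
Let A := 1 + (1/2 - nu) / x.

Lemma tangent_point_pos : 0 < A.
Proof. unfold A. assert (0 < (1/2 - nu) / x) by (apply Rdiv_lt_0_compat; lra). lra. Qed.

Definition besselK_minorant (t : R) : R :=
  Rpower A (- a) * (besselK_integrand (1/2) x t - a * (2 - 4 * nu) / A * besselK_correction t).

Lemma continuous_besselK_minorant t : continuous besselK_minorant t.
Proof. unfold besselK_minorant, besselK_integrand, besselK_correction. solve_continuous. Qed.

Lemma besselK_minorant_lt t : 0 < t -> besselK_minorant t < besselK_integrand nu x t.
Proof.
intros Ht.
pose proof tangent_point_pos as HA.
pose proof (cosh_lt_cosh_mul_Rpower (2 * nu) (t / 2) ltac:(lra) ltac:(lra)) as Hcosh.
replace (2 * nu * (t / 2)) with (nu * t) in Hcosh by field.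
replace (2 * (t / 2)) with t in Hcosh by field.
replace ((1 + 2 * nu) / 2) with a in Hcosh by (unfold a; field).
set (B := 2 * nu + (1 - 2 * nu) * cosh t) in Hcosh.
set (s := sinh (t / 2)).
assert (HB : B = 1 + (2 - 4 * nu) * (s * s)).
{ unfold B, s. replace (cosh t) with (cosh (2 * (t / 2))) by (f_equal; field).
  rewrite cosh_double. ring. }
assert (HBpos : 0 < B) by (rewrite HB; nra).
assert (HRB : 0 < Rpower B a) by apply exp_pos.
assert (Hlower : cosh (t / 2) * Rpower B (- a) < cosh (nu * t)).
{ rewrite Rpower_Ropp. apply Rmult_lt_reg_r with (Rpower B a); [easy|].
  rewrite Rmult_assoc, Rinv_l by lra. lra. }
assert (Htangent := Rpower_opp_tangent_le a A B ltac:(unfold a; lra) HA HBpos).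
assert (HBA : B / A - 1 = (2 - 4 * nu) * (s * s - / (4 * x)) / A).
{ replace (B / A - 1) with ((B - A) / A) by (field; lra).
  f_equal. rewrite HB. unfold A. field. lra. }
rewrite HBA in Htangent.
pose proof (cosh_pos (t / 2)). pose proof (exp_pos (- x * cosh t)).
unfold besselK_minorant, besselK_integrand, besselK_correction. fold s.
replace (1 / 2 * t) with (t / 2) by field.
apply Rle_lt_trans with (exp (- x * cosh t) * (cosh (t / 2) * Rpower B (- a))).
- apply Rle_trans with (exp (- x * cosh t) * (cosh (t / 2)
    * (Rpower A (- a) * (1 - a * ((2 - 4 * nu) * (s * s - / (4 * x)) / A))))).
  + right. field. lra.
  + apply Rmult_le_compat_l; [lra|]. apply Rmult_le_compat_l; lra.
- apply Rmult_lt_compat_l; lra.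
Qed.

Lemma RInt_besselK_minorant_ge b : 0 <= b ->
  Rpower A (- a) * RInt (besselK_integrand (1/2) x) 0 b <= RInt besselK_minorant 0 b.
Proof.
intros Hb. unfold besselK_minorant.
pose proof tangent_point_pos as HA.
assert (Hk : 0 <= a * (2 - 4 * nu) / A)
  by (apply Rmult_le_pos; [unfold a; nra|apply Rlt_le, Rinv_0_lt_compat, HA]).
assert (Hcorr : RInt besselK_correction 0 b <= 0).
{ rewrite RInt_besselK_correction.
  assert (0 <= sinh (b / 2) * exp (- x * cosh b) / (2 * x)).
  { apply Rdiv_le_0_compat; [|lra].
    apply Rmult_le_pos; [apply sinh_nonneg; lra|apply Rlt_le, exp_pos]. }
  unfold Rdiv in *. lra. }
set (k := a * (2 - 4 * nu) / A) in *.
rewrite (is_RInt_unique (fun t => Rpower A (- a) * (besselK_integrand (1/2) x t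
                                                     - k * besselK_correction t))
           0 b (Rpower A (- a) * (RInt (besselK_integrand (1/2) x) 0 b
                                                - k * RInt besselK_correction 0 b))).
- apply Rmult_le_compat_l; [apply Rlt_le, exp_pos|].
  assert (0 <= k * - RInt besselK_correction 0 b) by (apply Rmult_le_pos; lra). lra.
- apply (is_RInt_scal (V := R_NormedModule)).
  apply (is_RInt_minus (V := R_NormedModule)); [|apply (is_RInt_scal (V := R_NormedModule))];
    apply (RInt_correct (V := R_CompleteNormedModule)), ex_RInt_of_continuous;
    [apply continuous_besselK_integrand|apply continuous_besselK_correction].
Qed.

Lemma BesselK_gt_lower :
  Rpower (x / (x + 1/2 - nu)) (nu + 1/2) * (sqrt (PI / (2 * x)) * exp (- x)) < BesselK nu x.
Proof.
pose proof tangent_point_pos as HA.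
replace (Rpower (x / (x + 1/2 - nu)) (nu + 1/2)) with (Rpower A (- a)).
2:{ unfold Rpower. f_equal. replace (x / (x + 1/2 - nu)) with (/ A) by (unfold A; field; lra).
    rewrite ln_Rinv by exact HA. unfold a. ring. }
destruct (RInt_gap besselK_minorant (besselK_integrand nu x) 0) as [d [Hd Hgap]];
  [apply continuous_besselK_minorant|apply continuous_besselK_integrand|apply besselK_minorant_lt|].
enough (Rpower A (- a) * (sqrt (PI / (2 * x)) * exp (- x)) + d <= BesselK nu x) by lra.
apply (is_lim_le_loc (fun b => Rpower A (- a) * RInt (besselK_integrand (1/2) x) 0 b + d)
         (RInt (besselK_integrand nu x) 0) p_infty
         (Rpower A (- a) * (sqrt (PI / (2 * x)) * exp (- x)) + d) (BesselK nu x)).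
- exists 1. intros b Hb. eapply Rle_trans; [|apply Hgap; lra].
  apply Rplus_le_compat_r, RInt_besselK_minorant_ge. lra.
- apply (is_lim_plus' _ (fun _ => d)); [|apply is_lim_const].
  apply (is_lim_scal_l _ (Rpower A (- a)) p_infty (sqrt (PI / (2 * x)) * exp (- x))).
  now apply is_lim_RInt_besselK_half.
- now apply is_lim_RInt_besselK.
Qed.

End BesselBounds.

Theorem corollary2p2 (nu : R) (hnu0 : 0 <= nu) (hnu1 : nu < 1/2) :
  forall x : R, 0 < x ->
    Rpower (x / (x + 1/2 - nu)) (nu + 1/2)
      < sqrt (2 * x / PI) * exp x * BesselK nu x
    /\ sqrt (2 * x / PI) * exp x * BesselK nu x < 1.
Proof.
intros x hx.
pose proof PI_RGT_0 as Hpi.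
set (J := sqrt (PI / (2 * x)) * exp (- x)).
set (N := sqrt (2 * x / PI) * exp x).
assert (HN : 0 < N) by (apply Rmult_lt_0_compat; [apply sqrt_lt_R0, Rdiv_lt_0_compat|apply exp_pos]; lra).
assert (HNJ : N * J = 1).
{ unfold N, J. rewrite !sqrt_div_alt by lra. rewrite exp_Ropp.
  assert (0 < sqrt PI) by (apply sqrt_lt_R0; lra).
  assert (0 < sqrt (2 * x)) by (apply sqrt_lt_R0; lra).
  pose proof (exp_pos x). field. lra. }
pose proof (BesselK_gt_lower nu x hnu0 hnu1 hx) as Hlower. fold J in Hlower.
pose proof (BesselK_lt_half nu x hnu0 hnu1 hx) as Hupper. fold J in Hupper.
set (c := Rpower (x / (x + 1/2 - nu)) (nu + 1/2)) in *.
split.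
- rewrite <- (Rmult_1_l c), <- HNJ, Rmult_assoc, (Rmult_comm J).
  now apply Rmult_lt_compat_l.
- rewrite <- HNJ. now apply Rmult_lt_compat_l.
Qed.
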